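(* Let $R$ be a commutative noetherian ring, $A$ a finite $R$-algebra, $I$ an indecomposable injective $A$-module and $\mathfrak{p}=\alpha(I)$. For $r\in R$ let $\lambda_r^I\in\mathrm{End}_A(I)$ be multiplication by $r$. Then: (1) if $r\in\mathfrak{p}$, then $\lambda_r^I$ is locally nilpotent (for every $x\in I$ there is $n$ with $r^nx=0$); (2) if $r\in R\setminus\mathfrak{p}$, then $\lambda_r^I$ is invertible; (3) $\mathfrak{p}$ is the unique associated prime ideal of $I$ viewed as an $R$-module; (4) $\mathrm{Supp}(I)=\overline{\{\mathfrak{p}\}}\subset\mathrm{Spec}(R)$.
   Context: A finite $R$-algebra is a ring $A$ with an injective ring map $R\to Z(A)$ making $A$ a finitely generated $R$-module. For an indecomposable injective $A$-module $I$ there is a unique prime (two-sided) ideal $P$ of $A$ such that the injective envelope $E_A(A/P)$ is isomorphic to a finite direct sum of copies of $I$; $\alpha(I):=P\cap R$, a prime ideal of $R$. *)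

From HB Require Import structures.
From mathcomp Require Import all_boot all_order all_algebra.
Set Implicit Arguments. Unset Strict Implicit. Unset Printing Implicit Defensive.
Import GRing.Theory.
Local Open Scope ring_scope.

Definition two_sided_ideal (A : nzRingType) (J : A -> Prop) : Prop :=
  [/\ J 0, (forall x y, J x -> J y -> J (x + y)) &
      (forall a x, J x -> J (a * x) /\ J (x * a))].

(* prime two-sided ideal: proper, and X Y <= P implies X <= P or Y <= P
   for two-sided ideals X, Y (X Y <= P unfolds to x y \in P for x \in X, y \in Y) *)
Definition prime_two_sided_ideal (A : nzRingType) (P : A -> Prop) : Prop :=
  [/\ two_sided_ideal P, ~ P 1 &
      forall X Y : A -> Prop, two_sided_ideal X -> two_sided_ideal Y ->
        (forall x y, X x -> Y y -> P (x * y)) ->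
        (forall x, X x -> P x) \/ (forall y, Y y -> P y)].

Definition ideal_of (R : comNzRingType) (J : R -> Prop) : Prop :=
  [/\ J 0, (forall x y, J x -> J y -> J (x + y)) &
      (forall a x, J x -> J (a * x))].

Definition prime_ideal_of (R : comNzRingType) (J : R -> Prop) : Prop :=
  [/\ ideal_of J, ~ J 1 & forall x y, J (x * y) -> J x \/ J y].

Definition noetherian_ring (R : comNzRingType) : Prop :=
  forall J : R -> Prop, ideal_of J ->
    exists s : seq R, forall r, J r <->
      exists c : seq R, r = \sum_(i < size s) c`_i * s`_i.

Definition finite_algebra (R : comNzRingType) (A : nzRingType)
    (f : {rmorphism R -> A}) : Prop :=
  [/\ injective f, (forall r a, f r * a = a * f r) &
      exists s : seq A, forall a, exists c : seq R,
        a = \sum_(i < size s) f c`_i * s`_i].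

Definition Alin (A : nzRingType) (M N : lmodType A) (g : M -> N) : Prop :=
  forall (a : A) (u v : M), g (a *: u + v) = a *: g u + g v.

Definition submodule (A : nzRingType) (M : lmodType A) (S : M -> Prop) : Prop :=
  S 0 /\ forall (a : A) (u v : M), S u -> S v -> S (a *: u + v).

Definition injective_module (A : nzRingType) (E : lmodType A) : Prop :=
  forall (M N : lmodType A) (g : M -> N) (h : M -> E),
    Alin g -> injective g -> Alin h ->
    exists k : N -> E, Alin k /\ forall m, k (g m) = h m.

Definition indecomposable_module (A : nzRingType) (M : lmodType A) : Prop :=
  (exists x : M, x != 0) /\
  forall U V : M -> Prop, submodule U -> submodule V ->
    (forall x, U x -> V x -> x = 0) ->
    (forall x, exists u v, [/\ U u, V v & x = u + v]) ->
    (forall x, U x -> x = 0) \/ (forall x, V x -> x = 0).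

Definition injective_envelope (A : nzRingType) (Q E : lmodType A)
    (j : Q -> E) : Prop :=
  [/\ injective_module E, Alin j, injective j &
      forall U : E -> Prop, submodule U -> (exists u, U u /\ u != 0) ->
        exists q, U (j q) /\ j q != 0].

(* Q is (a model of) the cyclic left module A/P, via the surjection pi *)
Definition quotient_model (A : nzRingType) (P : A -> Prop) (Q : lmodType A)
    (pi : A -> Q) : Prop :=
  [/\ forall a b c : A, pi (a * b + c) = a *: pi b + pi c,
      (forall q, exists a, pi a = q) &
      forall a, pi a = 0 <-> P a].

(* P is the prime ideal attached to I: E_A(A/P) is isomorphic to I^n *)
Definition attached_prime (A : nzRingType) (I : lmodType A) (P : A -> Prop) : Prop :=
  prime_two_sided_ideal P /\
  exists (n : nat) (Q : lmodType A) (pi : A -> Q) (j : Q -> {ffun 'I_n -> I}),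
    quotient_model P pi /\ injective_envelope j.

Definition Rann (R : comNzRingType) (A : nzRingType) (f : {rmorphism R -> A})
    (M : lmodType A) (x : M) : R -> Prop :=
  fun r => f r *: x = 0.

Definition associated_prime (R : comNzRingType) (A : nzRingType)
    (f : {rmorphism R -> A}) (M : lmodType A) (q : R -> Prop) : Prop :=
  prime_ideal_of q /\ exists x : M, forall r, q r <-> Rann f x r.

(* q is in Supp(M): the localization M_q is nonzero, i.e. some x/s is nonzero,
   where x/s = 0 in M_q iff t x = 0 for some t outside q *)
Definition in_support (R : comNzRingType) (A : nzRingType)
    (f : {rmorphism R -> A}) (M : lmodType A) (q : R -> Prop) : Prop :=
  prime_ideal_of q /\
  exists (x : M) (s : R), ~ q s /\ ~ (exists t, ~ q t /\ f t *: x = 0).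

(* Zariski closure of a set S of primes: the primes q lying in every closed set
   V(J) containing S *)
Definition zariski_closure (R : comNzRingType) (S : (R -> Prop) -> Prop)
    (q : R -> Prop) : Prop :=
  prime_ideal_of q /\
  forall J : R -> Prop, ideal_of J ->
    (forall p, S p -> forall r, J r -> p r) -> forall r, J r -> q r.

From HB Require Import structures.
From mathcomp Require Import all_boot all_order all_algebra.
From Stdlib Require Import Classical.
Import GRing.Theory.
Set Implicit Arguments. Unset Strict Implicit.
Local Open Scope ring_scope.

(* Let E = I^n be the injective envelope of A/P. For r outside p, the kernel of
   the central element f r on E meets A/P trivially, because P is prime; being a
   submodule of an essential extension it is zero, and injectivity of I then
   makes multiplication by f r on I invertible. For r in p, the kernels of
   f r ^+ k on the finitely generated R-module A x stabilise at some N since R is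
   noetherian; the submodule f r ^+ N A x then has no nonzero element killed by
   f r, whereas f r kills A/P, so it meets A/P trivially and vanishes. The
   component of the image of 1 in I is a nonzero element annihilated exactly by
   p, and the statements on associated primes and support follow formally. *)

Lemma prime_two_sided_central_mul (A : nzRingType) (P : A -> Prop) (u a : A) :
  prime_two_sided_ideal P -> (forall b, GRing.comm u b) ->
  P (u * a) -> ~ P u -> P a.
Proof.
case=> [[P0 PD PM] _ Pprime] uC Pua Pu.
pose X b := exists c, b = c * u.
pose Y b := forall c, P (u * c * b).
have X_ideal : two_sided_ideal X.
  split; first by exists 0; rewrite mul0r.
  - by move=> _ _ [c ->] [d ->]; exists (c + d); rewrite mulrDl.
  - move=> b _ [c ->]; split; first by exists (b * c); rewrite mulrA.
    by exists (c * b); rewrite -mulrA uC mulrA.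
have Y_ideal : two_sided_ideal Y.
  split; first by move=> c; rewrite mulr0.
  - by move=> x y Yx Yy c; rewrite mulrDr; apply: PD.
  - move=> b x Yx; split=> c; first by rewrite mulrA -(mulrA u); apply: Yx.
    by rewrite mulrA; case: (PM b _ (Yx c)).
have XY_P : forall x y, X x -> Y y -> P (x * y).
  move=> _ y [c ->] Yy; have := Yy 1; rewrite mulr1 -mulrA.
  by case/(PM c).
case: (Pprime X Y X_ideal Y_ideal XY_P) => [XP | YP].
  by exfalso; apply: Pu; apply: XP; exists 1; rewrite mul1r.
by apply: YP => c; rewrite uC -mulrA; case: (PM c _ Pua).
Qed.

Lemma prime_ideal_comap (R : comNzRingType) (A : nzRingType)
    (f : {rmorphism R -> A}) (P : A -> Prop) :
  prime_two_sided_ideal P -> (forall r a, GRing.comm (f r) a) ->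
  prime_ideal_of (fun r => P (f r)).
Proof.
move=> Pprime fC; have [[P0 PD PM] P1 _] := Pprime.
split; last 1 first.
- move=> x y; rewrite rmorphM => Pxy.
  case: (classic (P (f x))) => Px; first by left.
  by right; apply: prime_two_sided_central_mul Pxy Px.
- split; first by rewrite rmorph0.
  + by move=> x y Px Py; rewrite rmorphD; apply: PD.
  + by move=> a x Px; rewrite rmorphM; case: (PM (f a) _ Px).
- by rewrite rmorph1.
Qed.

Lemma prime_idealX (R : comNzRingType) (q : R -> Prop) (r : R) (n : nat) :
  prime_ideal_of q -> q (r ^+ n) -> q r.
Proof.
case=> _ q1 qprime; elim: n => [|n IHn]; first by rewrite expr0.
by rewrite exprS => /qprime [|/IHn].
Qed.

Lemma Alin0 (A : nzRingType) (M N : lmodType A) (g : M -> N) : Alin g -> g 0 = 0.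
Proof.
move=> g_lin; have := g_lin 1 0 0; rewrite scaler0 addr0 scale1r => g00.
by apply: (@addrI _ (g 0)); rewrite addr0 -g00.
Qed.

Lemma AlinZ (A : nzRingType) (M N : lmodType A) (g : M -> N) a u :
  Alin g -> g (a *: u) = a *: g u.
Proof. by move=> g_lin; have := g_lin a u 0; rewrite !addr0 (Alin0 g_lin) addr0. Qed.

Section Chains.
Variables (X : Type) (K : nat -> X -> Prop).

Definition ascending := forall k x, K k x -> K k.+1 x.
Definition stationary := exists N, forall k x, K k x -> K N x.

Lemma ascending_le : ascending -> forall k l x, (k <= l)%N -> K k x -> K l x.
Proof.
move=> Kup k l x /subnK <-; elim: (l - k)%N => [//|m IHm] Kx.
by rewrite addSn; apply/Kup/IHm.
Qed.

Lemma ascending_bound (g : nat -> X) (m : nat) : ascending ->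
  (forall i, (i < m)%N -> exists k, K k (g i)) ->
  exists N, forall i, (i < m)%N -> K N (g i).
Proof.
move=> Kup; elim: m => [|m IHm] gK; first by exists 0%N.
have [N KN] := IHm (fun i lt_im => gK i (ltnW lt_im)).
have [k Kk] := gK m (ltnSn m).
exists (maxn N k) => i; rewrite ltnS leq_eqVlt => /predU1P [->|lt_im].
  exact: ascending_le Kup _ _ _ (leq_maxr N k) Kk.
exact: ascending_le Kup _ _ _ (leq_maxl N k) (KN i lt_im).
Qed.

End Chains.

Lemma ideal_span_generator (R : comNzRingType) (J : R -> Prop) (s : seq R) :
  (forall r, J r <-> exists c : seq R, r = \sum_(i < size s) c`_i * s`_i) ->
  forall i, (i < size s)%N -> J s`_i.
Proof.
move=> Jspan i lt_is; apply/Jspan; exists (mkseq (fun k => (k == i)%:R) (size s)).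
rewrite (bigD1 (Ordinal lt_is)) //= nth_mkseq // eqxx mul1r big1 ?addr0 // => k.
by rewrite nth_mkseq // -val_eqE /= => /negbTE ->; rewrite mul0r.
Qed.

Lemma noetherian_ideal_chain (R : comNzRingType) (C : nat -> R -> Prop) :
  noetherian_ring R -> (forall k, ideal_of (C k)) -> ascending C -> stationary C.
Proof.
move=> noeth C_ideal Cup.
pose U r := exists k, C k r.
have U_ideal : ideal_of U.
  split; first by exists 0%N; case: (C_ideal 0%N).
  - move=> x y [k Cx] [l Cy]; exists (maxn k l).
    have [_ CD _] := C_ideal (maxn k l).
    by apply: CD; [apply: ascending_le (leq_maxl k l) Cx |
                   apply: ascending_le (leq_maxr k l) Cy].
  - by move=> a x [k Cx]; exists k; case: (C_ideal k) => _ _; apply.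
have [s Uspan] := noeth U U_ideal.
have [N CN] := ascending_bound Cup (ideal_span_generator Uspan).
exists N => k r Cr; have [c ->] : exists c : seq R, r = \sum_(i < size s) c`_i * s`_i.
  by apply/Uspan; exists k.
have [C0 CD CM] := C_ideal N.
by apply: (big_ind (C N)) => // i _; apply/CM/CN.
Qed.

Section RSubmodules.
Variables (R : comNzRingType) (A : nzRingType) (f : {rmorphism R -> A}).
Variable E : lmodType A.

Definition Rsubmodule (K : E -> Prop) :=
  [/\ K 0, forall x y, K x -> K y -> K (x + y) & forall c x, K x -> K (f c *: x)].

Fixpoint Rspan (s : seq E) (e : E) : Prop :=
  if s is m :: s' then exists c e', Rspan s' e' /\ e = f c *: m + e' else e = 0.

Lemma RsubmoduleB K x y : Rsubmodule K -> K x -> K y -> K (x - y).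
Proof.
by case=> _ KD KZ Kx Ky; apply: KD Kx _; rewrite -scaleN1r -(rmorphN1 f); apply: KZ.
Qed.

Lemma RsubmoduleI K K' : Rsubmodule K -> Rsubmodule K' ->
  Rsubmodule (fun x => K x /\ K' x).
Proof.
case=> K0 KD KZ [K'0 K'D K'Z]; split=> // [x y [Kx K'x] [Ky K'y] | c x [Kx K'x]].
  by split; [apply: KD | apply: K'D].
by split; [apply: KZ | apply: K'Z].
Qed.

Lemma Rspan_Rsubmodule s : Rsubmodule (Rspan s).
Proof.
elim: s => [|m s [S0 SD SZ]] /=.
  by split=> [//|x y -> ->|c x ->]; rewrite ?addr0 ?scaler0.
split; first by exists 0, 0; rewrite rmorph0 scale0r addr0.
  move=> _ _ [c [e [Se ->]]] [d [e' [Se' ->]]]; exists (c + d), (e + e').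
  by rewrite rmorphD scalerDl addrACA; split; first apply: SD.
move=> a _ [c [e [Se ->]]]; exists (a * c), (f a *: e).
by rewrite scalerDr scalerA rmorphM; split; first apply: SZ.
Qed.

Lemma Rspan_scale_sum (sA : seq A) (z : E) (c : seq R) :
  Rspan (map (fun b => b *: z) sA) ((\sum_(i < size sA) f c`_i * sA`_i) *: z).
Proof.
elim: sA c => [|b sA IHsA] c /=; first by rewrite big_ord0 scale0r.
rewrite big_ord_recl; exists c`_0, ((\sum_(i < size sA) f (behead c)`_i * sA`_i) *: z).
split=> //; rewrite scalerDl scalerA; congr (_ + _ *: z).
by apply: eq_bigr => i _; rewrite nth_behead.
Qed.

Lemma finite_algebra_Rspan_orbit (z : E) : finite_algebra f ->
  exists S, forall a, Rspan S (a *: z).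
Proof.
by case=> _ _ [sA sA_span]; exists (map (fun b => b *: z) sA) => a;
  have [c ->] := sA_span a; apply: Rspan_scale_sum.
Qed.

Section LeadingCoefficients.
Variables (m : E) (s : seq E) (K : E -> Prop).

Definition lead_coef_ideal c := exists e, Rspan s e /\ K (f c *: m + e).

Lemma lead_coef_ideal_ideal : Rsubmodule K -> ideal_of lead_coef_ideal.
Proof.
case=> K0 KD KZ; have [S0 SD SZ] := Rspan_Rsubmodule s.
split; first by exists 0; rewrite rmorph0 scale0r addr0.
  move=> x y [e [Se Kx]] [e' [Se' Ky]]; exists (e + e'); split; first exact: SD.
  by rewrite rmorphD scalerDl addrACA; apply: KD.
move=> a x [e [Se Kx]]; exists (f a *: e); split; first exact: SZ.
by rewrite rmorphM -scalerA -scalerDr; apply: KZ.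
Qed.

End LeadingCoefficients.

(* Induction on s: a chain inside R m + Rspan s is stationary as soon as the
   chain of its ideals of coefficients on m and the chain of its traces on
   Rspan s both are. *)
Lemma noetherian_Rspan_chain (s : seq E) (K : nat -> E -> Prop) :
  noetherian_ring R -> (forall k, Rsubmodule (K k)) -> ascending K ->
  (forall k x, K k x -> Rspan s x) -> stationary K.
Proof.
move=> noeth; elim: s K => [|m s IHs] K K_sub Kup K_span.
  by exists 0%N => k x /K_span ->; case: (K_sub 0%N).
pose L k := lead_coef_ideal m s (K k).
have Lup : ascending L by move=> k c [e [Se Kc]]; exists e; split; last apply: Kup.
have [N1 LN1] : stationary L.
  by apply: noetherian_ideal_chain => // k; apply: lead_coef_ideal_ideal.
pose T k x := K k x /\ Rspan s x.
have [N2 TN2] : stationary T.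
  apply: IHs => [k | k x [Kx Sx] | k x []] //; last by split; first apply: Kup.
  exact: RsubmoduleI (Rspan_Rsubmodule s).
exists (maxn N1 N2) => k x Kx.
have {}Kx : K (maxn k (maxn N1 N2)) x := ascending_le Kup (leq_maxl _ _) Kx.
have [c [e [Se xE]]] := K_span _ _ Kx.
have [e' [Se' Kw]] : L (maxn N1 N2) c.
  apply: (ascending_le Lup (leq_maxl N1 N2)); apply: (LN1 (maxn k (maxn N1 N2))).
  by exists e; rewrite -xE.
have Kw' := ascending_le Kup (leq_maxr k _) Kw.
have [KN2 _] : T N2 (x - (f c *: m + e')).
  apply: TN2; split; first exact: RsubmoduleB (K_sub _) Kx Kw'.
  rewrite xE opprD addrACA subrr add0r.
  exact: RsubmoduleB (Rspan_Rsubmodule s) Se Se'.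
have [_ KD _] := K_sub (maxn N1 N2).
rewrite -(subrK (f c *: m + e') x).
exact: KD _ _ (ascending_le Kup (leq_maxr N1 N2) KN2) Kw.
Qed.

Lemma scale_kernel_chain_stationary (r : R) (z : E) :
  noetherian_ring R -> finite_algebra f ->
  exists N, forall a, f r ^+ N.+1 *: (a *: z) = 0 -> f r ^+ N *: (a *: z) = 0.
Proof.
move=> noeth /(finite_algebra_Rspan_orbit z) [S Az_span].
pose K k e := Rspan S e /\ f r ^+ k *: e = 0.
have K_sub k : Rsubmodule (K k).
  apply: RsubmoduleI (Rspan_Rsubmodule S) _; split=> [|x y rx ry|c x rx].
  - by rewrite scaler0.
  - by rewrite scalerDr rx ry addr0.
  - by rewrite scalerA -rmorphXn -rmorphM mulrC rmorphM -scalerA rmorphXn rx scaler0.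
have Kup : ascending K by move=> k e [Se re]; split; rewrite // exprS -scalerA re scaler0.
have [N KN] := noetherian_Rspan_chain noeth K_sub Kup (fun k e => @proj1 _ _).
by exists N => a ra; have [] := KN N.+1 (a *: z) (conj (Az_span a) ra).
Qed.

End RSubmodules.

Lemma injective_module_scale_invertible (A : nzRingType) (I : lmodType A) (u : A) :
  injective_module I -> (forall a, GRing.comm u a) ->
  (forall x : I, u *: x = 0 -> x = 0) ->
  exists g : I -> I, [/\ Alin g, cancel (fun x => u *: x) g & cancel g (fun x => u *: x)].
Proof.
move=> I_inj uC u_inj.
have u_lin : Alin (fun x : I => u *: x) by move=> a v w; rewrite scalerDr !scalerA uC.
have u_injective : injective (fun x : I => u *: x).
  move=> v w /eqP; rewrite -subr_eq0 -scalerBr => /eqP /u_inj /eqP.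
  by rewrite subr_eq0 => /eqP.
have [g [g_lin gK]] := I_inj I I _ id u_lin u_injective (fun a v w => erefl).
by exists g; split=> // x /=; rewrite -(AlinZ _ _ g_lin) gK.
Qed.

Lemma quotient_modelM (A : nzRingType) (P : A -> Prop) (Q : lmodType A)
    (pi : A -> Q) a b :
  quotient_model P pi -> pi (a * b) = a *: pi b.
Proof.
case=> piM _ _; have pi0 : pi 0 = 0.
  have := piM 1 0 0; rewrite mulr0 addr0 scale1r => pi00.
  by apply: (@addrI _ (pi 0)); rewrite addr0 -pi00.
by have := piM a b 0; rewrite !addr0 pi0 addr0.
Qed.

Section Envelope.
Variables (A : nzRingType) (P : A -> Prop) (Q E : lmodType A) (pi : A -> Q) (j : Q -> E).
Hypotheses (P_prime : prime_two_sided_ideal P) (pi_quo : quotient_model P pi)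
  (j_env : injective_envelope j).

Lemma envelope_quotient_eq0 a : j (pi a) = 0 <-> P a.
Proof.
have [_ j_lin j_inj _] := j_env; have [_ _ pi0] := pi_quo.
by rewrite -pi0 -(Alin0 j_lin); split=> [/j_inj | ->].
Qed.

Lemma envelope_scale_quotient u a : j (pi (u * a)) = u *: j (pi a).
Proof.
by have [_ j_lin _ _] := j_env; rewrite (quotient_modelM _ _ pi_quo) (AlinZ _ _ j_lin).
Qed.

Lemma envelope_generator_neq0 : j (pi 1) != 0.
Proof. by apply/eqP => /envelope_quotient_eq0; case: P_prime. Qed.

Lemma envelope_generator_scale_eq0 u : P u -> u *: j (pi 1) = 0.
Proof. by rewrite -envelope_scale_quotient mulr1 => /envelope_quotient_eq0. Qed.

Lemma envelope_scale_inj u : (forall a, GRing.comm u a) -> ~ P u ->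
  forall x : E, u *: x = 0 -> x = 0.
Proof.
move=> uC Pu x ux; have [//|x_neq0] := eqVneq x 0.
have [_ _ _ j_ess] := j_env; have [_ pi_surj _] := pi_quo.
pose U (e : E) := u *: e = 0.
have U_sub : submodule U.
  split=> [|a v w Uv Uw]; first by rewrite /U scaler0.
  by rewrite /U scalerDr scalerA uC -scalerA Uv Uw scaler0 addr0.
have [q [Ujq jq_neq0]] := j_ess U U_sub (ex_intro _ x (conj ux x_neq0)).
have [a qa] := pi_surj q; move: Ujq jq_neq0; rewrite -{}qa /U -envelope_scale_quotient.
move=> /envelope_quotient_eq0 /(prime_two_sided_central_mul P_prime uC) /(_ Pu).
by move=> /envelope_quotient_eq0 ->; rewrite eqxx.
Qed.

Lemma envelope_scale_nilpotent u (z : E) N : (forall a, GRing.comm u a) -> P u ->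
  (forall a, u ^+ N.+1 *: (a *: z) = 0 -> u ^+ N *: (a *: z) = 0) ->
  u ^+ N *: z = 0.
Proof.
move=> uC Pu ker_stable; have [//|uz_neq0] := eqVneq (u ^+ N *: z) 0.
have [[_ _ PM] _ _] := P_prime.
have [_ _ _ j_ess] := j_env; have [_ pi_surj _] := pi_quo.
pose W (e : E) := exists a, e = u ^+ N *: (a *: z).
have W_sub : submodule W.
  split=> [|b _ _ [a ->] [a' ->]]; first by exists 0; rewrite scale0r scaler0.
  exists (b * a + a').
  rewrite scalerA (commrX N (commr_sym (uC b))) -scalerA (scalerA b a z).
  by rewrite -scalerDr -scalerDl.
have [q [[a jqE] jq_neq0]] : exists q, W (j q) /\ j q != 0.
  apply: j_ess => //; exists (u ^+ N *: (1 *: z)).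
  by split; [exists 1 | rewrite scale1r].
have u_jq : u *: j q = 0.
  have [c <-] := pi_surj q; rewrite -envelope_scale_quotient.
  by apply/envelope_quotient_eq0; case: (PM c u Pu).
move: jq_neq0; rewrite jqE ker_stable ?eqxx //.
by rewrite exprS -scalerA -jqE u_jq.
Qed.

End Envelope.

Lemma exists_ffun_neq0 (T : finType) (V : nmodType) (v : {ffun T -> V}) :
  v != 0 -> exists i, v i != 0.
Proof.
move=> v_neq0; apply/existsP; rewrite -negb_forall; apply: contra v_neq0 => /forallP v0.
by apply/eqP/ffunP => i; rewrite ffunE; apply/eqP.
Qed.

Lemma scale_const_ffun_eq0 (A : nzRingType) (M : lmodType A) (T : finType) (i0 : T) u (x : M) :
  u *: [ffun _ : T => x] = 0 <-> u *: x = 0.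
Proof.
split=> [/ffunP /(_ i0) | ux]; first by rewrite !ffunE.
by apply/ffunP => i; rewrite !ffunE.
Qed.

Section PrimarySupport.
Variables (R : comNzRingType) (A : nzRingType) (f : {rmorphism R -> A}).
Variables (M : lmodType A) (p : R -> Prop) (y : M).
Hypotheses (p_prime : prime_ideal_of p)
  (p_nil : forall r, p r -> forall x : M, exists n, f r ^+ n *: x = 0)
  (p_inj : forall r, ~ p r -> forall x : M, f r *: x = 0 -> x = 0)
  (y_neq0 : y != 0) (p_y : forall r, p r -> f r *: y = 0).

Lemma Rann_primary r : Rann f y r <-> p r.
Proof.
split=> [ry | /p_y //]; apply: NNPP => pr.
by move/eqP: y_neq0; apply; apply: p_inj ry.
Qed.

Lemma associated_prime_primary q :
  associated_prime f M q <-> (forall r, q r <-> p r).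
Proof.
split=> [[q_prime [x qx]] r | qp]; last first.
  split; last by exists y => r; rewrite qp Rann_primary.
  have [[p0 pD pM] p1 pP] := p_prime.
  split; first split; rewrite ?qp //.
  - by move=> a b; rewrite !qp; apply: pD.
  - by move=> a b; rewrite !qp; apply: pM.
  - by move=> a b; rewrite !qp; apply: pP.
split=> [/qx rx | pr].
  apply: NNPP => pr; have [_ q1 _] := q_prime; apply/q1/qx.
  by rewrite /Rann (p_inj pr rx) scaler0.
have [n rx] := p_nil pr x.
by apply: (prime_idealX (n := n) q_prime); apply/qx; rewrite /Rann rmorphXn.
Qed.

Lemma in_support_primary q :
  in_support f M q <-> zariski_closure (fun q' => forall r, q' r <-> p r) q.
Proof.
split=> [[q_prime [x [_ [_ x_q]]]] | [q_prime q_closed]].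
  split=> // J _ J_p r Jr; have [n rx] := p_nil (J_p p (fun=> iff_refl _) r Jr) x.
  apply: (prime_idealX (n := n) q_prime); apply: NNPP => qr; apply: x_q.
  by exists (r ^+ n); rewrite rmorphXn.
have p_q : forall r, p r -> q r.
  by apply: q_closed => [|p' p'_p r]; [case: p_prime | rewrite p'_p].
have [_ q1 _] := q_prime.
split=> //; exists y, 1; split=> // [[t [qt /Rann_primary /p_q]]].
exact: qt.
Qed.

End PrimarySupport.

Theorem proposition3p8 (R : comNzRingType) (A : nzRingType)
    (f : {rmorphism R -> A}) (I : lmodType A) (P : A -> Prop) :
  noetherian_ring R -> finite_algebra f ->
  injective_module I -> indecomposable_module I ->
  attached_prime I P ->
  let p : R -> Prop := fun r => P (f r) in
  [/\ (forall r, p r -> forall x : I, exists n : nat, f r ^+ n *: x = 0),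
      (forall r, ~ p r ->
         exists g : I -> I, [/\ Alin g, cancel (fun x => f r *: x) g &
                                cancel g (fun x => f r *: x)]),
      (forall q : R -> Prop, associated_prime f I q <-> (forall r, q r <-> p r)) &
      (forall q : R -> Prop,
         in_support f I q <-> zariski_closure (fun q' => forall r, q' r <-> p r) q)].

Proof.
move=> noeth fin I_inj _ [P_prime [n [Q [pi [j [pi_quo j_env]]]]]] p.
have fC : forall r a, GRing.comm (f r) a by case: fin.
have [i0 y_neq0] := exists_ffun_neq0 (envelope_generator_neq0 P_prime pi_quo j_env).
have p_inj : forall r, ~ p r -> forall x : I, f r *: x = 0 -> x = 0.
  move=> r pr x /(scale_const_ffun_eq0 i0).
  move=> /(envelope_scale_inj P_prime pi_quo j_env (fC r) pr) /ffunP /(_ i0).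
  by rewrite !ffunE.
have p_nil : forall r, p r -> forall x : I, exists N, f r ^+ N *: x = 0.
  move=> r pr x.
  have [N ker_stable] := scale_kernel_chain_stationary r [ffun _ : 'I_n => x] noeth fin.
  exists N; apply/(scale_const_ffun_eq0 i0).
  exact (envelope_scale_nilpotent P_prime pi_quo j_env (fC r) pr ker_stable).
have p_y : forall r, p r -> f r *: j (pi 1) i0 = 0.
  move=> r /(envelope_generator_scale_eq0 pi_quo j_env) /ffunP /(_ i0).
  by rewrite !ffunE.
have p_prime : prime_ideal_of p := prime_ideal_comap P_prime fC.
split=> // [r pr | q | q].
- exact: injective_module_scale_invertible I_inj (fC r) (p_inj r pr).
- exact (associated_prime_primary p_prime p_nil p_inj y_neq0 p_y q).
- exact (in_support_primary p_prime p_nil p_inj y_neq0 p_y q).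
Qed.
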